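(* Fix integers $k\ge 2$ and $1 \le t \le k/2$. Let $X$ be a set of $n$ elements with a fixed but unknown total order, and consider a $(k,t)$ scale, which on input any $k$-element subset of $X$ returns the $t$-th smallest element of that subset. Let $S$ be the set of the $t-1$ smallest elements of $X$ and $L$ the set of the $k-t$ largest elements of $X$. Then there is an off-line (non-adaptive) family of $O(n^{k-t+1})$ queries (for fixed $k,t$, as $n\to\infty$) from whose results the relative order of the elements of $X\setminus(S\cup L)$ can be determined, for every possible ordering of $X$. Together with the matching lower bound, this order $n^{k-t+1}$ is best possible.
   Context: A query is a $k$-element subset of $X$; the scale returns its $t$-th smallest element. In the off-line setting the whole family of queries must be specified in advance (without knowledge of any results), and all results are then revealed simultaneously. *)

From mathcomp Require Import all_boot all_order all_fingroup.
Set Implicit Arguments. Unset Strict Implicit. Unset Printing Implicit Defensive.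

(* Ground set X = 'I_n.  A total order on X is encoded by a permutation
   sigma : {perm 'I_n}; sigma x is the (0-based) rank of x, so x is smaller
   than y iff sigma x < sigma y. *)

Definition scale_answer (t n : nat) (sigma : {perm 'I_n}) (Q : {set 'I_n})
  (x : 'I_n) : bool :=
  (x \in Q) && (#|[set y in Q | sigma y < sigma x]| == t.-1).

(* x lies in X \ (S u L): S = the t-1 smallest elements (ranks 0..t-2),
   L = the k-t largest elements (ranks n-(k-t) .. n-1). *)
Definition middle (k t n : nat) (sigma : {perm 'I_n}) (x : 'I_n) : bool :=
  (t.-1 <= sigma x) && (sigma x < n - (k - t)).

Definition determines_middle (k t n : nat) (F : {set {set 'I_n}}) : Prop :=
  forall sigma tau : {perm 'I_n},
    (forall Q x, Q \in F -> scale_answer t sigma Q x = scale_answer t tau Q x) ->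
    (forall x, middle k t sigma x = middle k t tau x) /\
    (forall x y, middle k t sigma x -> middle k t sigma y ->
       (sigma x < sigma y) = (tau x < tau y)).

From mathcomp Require Import all_boot all_order all_fingroup.
From mathcomp Require Import zify.
Set Implicit Arguments. Unset Strict Implicit. Unset Printing Implicit Defensive.

(* Query every k-subset of X that meets a fixed set W of k+2 elements in at
   least t-1 points; there are O(n^(k-t+1)) of them, as at most k-t+1 points
   of such a query lie outside W.  Every answer lies in the middle, and every
   middle element x is the answer to a query made of x, t-1 elements below x
   and k-t above x, chosen to contain as many elements of W as possible.
   Because |W| = k+2, such a query is robust: removing any element not below x
   still leaves t-1 points of W.  So if y immediately follows x, the query
   built with its upper part above y stays in the family after swapping y for
   any of its elements v above x, and x remains the answer.  If y preceded x
   in another consistent order, comparing the answers before and after each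
   swap would put all k-t elements above x below x in that order, whereas only
   t-1 can be, and k-t > t-1.  Consecutive middle elements are thus ordered
   alike, hence so is the whole middle. *)

Lemma ffact_leq_expn n j : n ^_ j <= n ^ j.
Proof.
elim: j => [|j IH]; first by rewrite ffactn0 expn0.
by rewrite ffactnSr expnSr leq_mul // leq_subr.
Qed.

Lemma bin_leq_expn n j : 'C(n, j) <= n ^ j.
Proof.
by apply: leq_trans (ffact_leq_expn n j); rewrite -bin_ffact leq_pmulr ?fact_gt0.
Qed.

Section FiniteSets.

Variable T : finType.
Implicit Types (A B Q R U W : {set T}) (x y v z : T).

Definition meeting_sets k m W : {set {set T}} :=
  [set Q : {set T} | (#|Q| == k) && (m <= #|Q :&: W|)].

Lemma card_small_sets b :
  0 < #|T| -> #|[set R : {set T} | #|R| <= b]| <= b.+1 * #|T| ^ b.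
Proof.
move=> T_gt0; elim: b => [|b IH].
  have -> : [set R : {set T} | #|R| <= 0] = [set set0].
    by apply/setP => R; rewrite !inE leqn0 cards_eq0.
  by rewrite cards1.
have -> : [set R : {set T} | #|R| <= b.+1] =
          [set R : {set T} | #|R| <= b] :|: [set R : {set T} | #|R| == b.+1].
  by apply/setP => R; rewrite !inE leq_eqVlt ltnS orbC.
apply: leq_trans (leq_card_setU _ _) _; rewrite card_draws mulSn addnC.
apply: leq_add; first exact: bin_leq_expn.
by apply: leq_trans IH _; rewrite leq_mul2l leq_pexp2l ?orbT.
Qed.

Lemma card_meeting_sets k m W : 0 < #|T| ->
  #|meeting_sets k m W| <= 2 ^ #|W| * ((k - m).+1 * #|T| ^ (k - m)).
Proof.
move=> T_gt0; pose f Q := (Q :&: W, Q :\: W).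
have f_inj : injective f.
  by move=> Q1 Q2 [eqI eqD]; rewrite -(setID Q1 W) -(setID Q2 W) eqI eqD.
rewrite -(card_imset _ f_inj) -card_powerset.
apply: leq_trans (leq_mul (leqnn _) (card_small_sets (k - m) T_gt0)).
rewrite -cardsX.
apply: subset_leq_card; apply/subsetP => _ /imsetP [Q + ->].
rewrite !inE /= subsetIr cardsD => /andP [/eqP -> leQ].
exact: leq_sub2l.
Qed.

Lemma cardsU_disjoint A B : [disjoint A & B] -> #|A :|: B| = #|A| + #|B|.
Proof. by move=> AB; rewrite -cardsUI (disjoint_setI0 AB) cards0 addn0. Qed.

Lemma subset_card_eq U j : j <= #|U| -> exists2 A : {set T}, A \subset U & #|A| = j.
Proof.
case/card_geqP => s [s_uniq s_size s_sub]; exists [set x in (s : seq T)].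
  by apply/subsetP => x; rewrite inE => /s_sub.
by rewrite cardsE (card_uniqP s_uniq).
Qed.

Lemma subset_card_maxI U W j : j <= #|U| ->
  exists A : {set T}, [/\ A \subset U, #|A| = j & #|A :&: W| = minn #|U :&: W| j].
Proof.
move=> le_jU.
have [A1 sA1 cA1] := subset_card_eq (geq_minl #|U :&: W| j).
have [A2 sA2 cA2] :
    exists2 A2 : {set T}, A2 \subset U :\: W & #|A2| = j - minn #|U :&: W| j.
  by apply: subset_card_eq; have := cardsID W U; lia.
rewrite subsetI in sA1; case/andP: sA1 => sA1U A1W.
rewrite subsetD in sA2; case/andP: sA2 => sA2U A2W.
have A1A2 : [disjoint A1 & A2] by rewrite (disjointWl A1W) // disjoint_sym.
exists (A1 :|: A2); split.
- by rewrite subUset sA1U sA2U.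
- by rewrite cardsU_disjoint // cA1 cA2; lia.
- by rewrite setIUl (setIidPl A1W) (disjoint_setI0 A2W) setU0.
Qed.

Lemma card_setU1_pred (p : pred T) R y : y \notin R ->
  #|[set z in y |: R | p z]| = p y + #|[set z in R | p z]|.
Proof.
move=> yR; case: (boolP (p y)) => py.
  have -> : [set z in y |: R | p z] = y |: [set z in R | p z].
    by apply/setP => z; rewrite !inE; case: eqVneq => // ->.
  by rewrite cardsU1 inE (negbTE yR).
rewrite add0n; apply: eq_card => z; rewrite !inE.
by case: eqVneq => // ->; rewrite (negbTE yR) (negbTE py).
Qed.

Lemma card_setU1D1_pred (p : pred T) Q v y : y \notin Q -> v \in Q ->
  #|[set z in y |: (Q :\ v) | p z]| + p v = #|[set z in Q | p z]| + p y.
Proof.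
move=> yQ vQ; rewrite -{2}(setD1K vQ) !card_setU1_pred ?inE ?eqxx ?(negbTE yQ) ?andbF //.
lia.
Qed.

Lemma card_split_at (r : T -> nat) Q x : injective r -> x \in Q ->
  #|Q| = #|[set z in Q | r z < r x]| + #|[set z in Q | r x < r z]|.+1.
Proof.
move=> r_inj xQ.
have below_sub : [set z in Q | r z < r x] \subset Q :\ x.
  apply/subsetP => z; rewrite !inE => /andP [-> lt_zx]; rewrite andbT.
  by apply: contraTneq lt_zx => ->; rewrite ltnn.
have -> : [set z in Q | r x < r z] = (Q :\ x) :\: [set z in Q | r z < r x].
  apply/setP => z; rewrite !inE.
  case: (eqVneq z x) => [->|zx]; first by rewrite ltnn andbF.
  case: (z \in Q) => //=; case: (ltngtP (r z) (r x)) => // /r_inj eq_zx.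
  by rewrite eq_zx eqxx in zx.
rewrite cardsDS // (cardsD1 x Q) xQ; have := subset_leq_card below_sub; lia.
Qed.

End FiniteSets.

Lemma card_ord_lt n r : r <= n -> #|[set i : 'I_n | i < r]| = r.
Proof.
move=> le_rn; have widen_inj : injective (widen_ord le_rn).
  by move=> i j /(congr1 val) eq_ij; apply: val_inj.
rewrite -[r in RHS]card_ord -cardsT -(card_imset _ widen_inj).
apply: eq_card => i; rewrite inE; apply/idP/imsetP => [lt_ir|[j _ ->]].
  by exists (Ordinal lt_ir) => //; apply: val_inj.
exact: (ltn_ord j).
Qed.

Section Ranks.

Variables (n : nat) (s : {perm 'I_n}).

Lemma rank_inj : injective (fun z => nat_of_ord (s z)).
Proof. by move=> y z /val_inj /perm_inj. Qed.

Lemma card_rank_lt x : #|[set z | s z < s x]| = s x.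
Proof.
have -> : [set z | s z < s x] = s @^-1: [set i : 'I_n | i < s x].
  by apply/setP => z; rewrite !inE.
by rewrite card_preimset ?card_ord_lt 1?ltnW //; exact: perm_inj.
Qed.

Lemma card_rank_gt x : #|[set z | s x < s z]| = n - (s x).+1.
Proof.
have := card_split_at rank_inj (in_setT x).
rewrite cardsT card_ord.
by rewrite !setIdE !setTI card_rank_lt; lia.
Qed.

Lemma card_rank_cover (W : {set 'I_n}) x y : s y <= (s x).+1 ->
  #|W| <= #|[set z | s z < s x] :&: W| + 2 + #|[set z | s y < s z] :&: W|.
Proof.
move=> le_yx.
have sub : W \subset
    ([set z | s z < s x] :&: W) :|: ([set x; y] :|: ([set z | s y < s z] :&: W)).
  apply/subsetP => z zW; rewrite !inE zW !andbT.
  case: (ltnP (s z) (s x)) => //= le_xz.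
  case: (ltnP (s y) (s z)) => [_|le_zy]; rewrite ?orbT //.
  have [/rank_inj ->|/rank_inj ->] : s z = s x :> nat \/ s z = s y :> nat by lia.
    by rewrite eqxx.
  by rewrite eqxx orbT.
apply: leq_trans (subset_leq_card sub) _; rewrite -addnA.
apply: leq_trans (leq_card_setU _ _) _; rewrite leq_add2l.
apply: leq_trans (leq_card_setU _ _) _; rewrite leq_add2r.
by rewrite cards2; case: (x != y).
Qed.

End Ranks.

Lemma scale_answer_middle k t n (s : {perm 'I_n}) (Q : {set 'I_n}) x :
  0 < t -> #|Q| = k -> scale_answer t s Q x -> middle k t s x.
Proof.
move=> t_gt0 cardQ /andP [xQ /eqP below_x].
have := card_split_at (@rank_inj _ s) xQ.
have le_below : #|[set z in Q | s z < s x]| <= #|[set z | s z < s x]|.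
  by apply: subset_leq_card; apply/subsetP => z; rewrite !inE => /andP [].
have le_above : #|[set z in Q | s x < s z]| <= #|[set z | s x < s z]|.
  by apply: subset_leq_card; apply/subsetP => z; rewrite !inE => /andP [].
rewrite card_rank_lt in le_below; rewrite card_rank_gt in le_above.
by have := ltn_ord (s x); rewrite /middle => *; apply/andP; split; lia.
Qed.

Lemma scale_answer_swap t n (s : {perm 'I_n}) (Q : {set 'I_n}) x v y :
  scale_answer t s Q x -> y \notin Q -> v \in Q -> v != x ->
  scale_answer t s (y |: (Q :\ v)) x = ((s y < s x) == (s v < s x)).
Proof.
case/andP=> xQ /eqP below_x yQ vQ vx.
rewrite /scale_answer !inE [x == v]eq_sym vx xQ orbT /=.
rewrite -(eqn_add2r (s v < s x)) card_setU1D1_pred // below_x eqn_add2l eq_sym.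
by case: (s y < s x); case: (s v < s x).
Qed.

Section Queries.

Variables (k t n : nat) (W : {set 'I_n}).
Hypotheses (t_gt0 : 0 < t) (t2_le_k : t.*2 <= k) (W_big : k.+2 <= #|W|).

Lemma exists_robust_query (s : {perm 'I_n}) x (b : {set 'I_n}) :
  t.-1 <= s x -> b \subset [set z | s x < s z] -> k - t <= #|b| ->
  #|W| <= #|[set z | s z < s x] :&: W| + 2 + #|b :&: W| ->
  exists Q : {set 'I_n},
    [/\ #|Q| = k, scale_answer t s Q x, Q \subset [set z | s z < s x] :|: (x |: b) &
        forall v, ~~ (s v < s x) -> t.-1 <= #|(Q :\ v) :&: W|].
Proof.
set a := [set z | s z < s x] => le_tx sub_b le_b cover.
have le_ta : t.-1 <= #|a| by rewrite card_rank_lt.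
have [A [sA cA wA]] := subset_card_maxI W le_ta.
have [B [sB cB wB]] := subset_card_maxI W le_b.
have A_below z : z \in A -> s z < s x by move/(subsetP sA); rewrite inE.
have B_above z : z \in B -> s x < s z by move/(subsetP sB)/(subsetP sub_b); rewrite inE.
have AB : [disjoint A & B].
  by apply/pred0P => z /=; apply/negbTE/andP => -[/A_below ? /B_above ?]; lia.
set Q := A :|: (x |: B).
have xQ : x \in Q by rewrite !inE eqxx orbT.
have below_Q : [set z in Q | s z < s x] = A.
  apply/setP => z; rewrite !inE; case: (boolP (z \in A)) => [/A_below -> //|_] /=.
  by apply/negbTE/andP => -[/orP [/eqP -> | /B_above ?] ?]; lia.
have above_Q : [set z in Q | s x < s z] = B.
  apply/setP => z; rewrite !inE.
  case: (boolP (z \in B)) => [/B_above -> |_] /=; rewrite ?orbT ?orbF //.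
  by apply/negbTE/andP => -[/orP [/A_below ? | /eqP -> ] ?]; lia.
exists Q; split.
- by rewrite (card_split_at (@rank_inj _ s) xQ) below_Q above_Q cA cB; lia.
- by rewrite /scale_answer xQ below_Q cA eqxx.
- by rewrite setUSS // setUS.
move=> v not_below_v.
have AQv : A \subset Q :\ v.
  apply/subsetP => z zA; rewrite !inE zA andbT.
  by apply: contraNneq not_below_v => <-; exact: A_below.
case: (leqP t.-1 #|A :&: W|) => [le_tA | lt_At].
  by apply: leq_trans le_tA _; apply/subset_leq_card; exact: setSI.
have le_ABQ : #|A :&: W| + #|B :&: W| <= #|Q :&: W|.
  rewrite -cardsU_disjoint; last exact: disjointW (subsetIl _ _) (subsetIl _ _) AB.
  by apply/subset_leq_card; rewrite -setIUl setSI // setUS // subsetU1.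
have := cardsD1 v (Q :&: W); have := leq_b1 (v \in Q :&: W); rewrite setIDAC.
move: lt_At le_ABQ cover; rewrite wA wB => *; lia.
Qed.

Lemma robust_query_meeting (s : {perm 'I_n}) x (Q : {set 'I_n}) : #|Q| = k ->
  (forall v, ~~ (s v < s x) -> t.-1 <= #|(Q :\ v) :&: W|) -> Q \in meeting_sets k t.-1 W.
Proof.
move=> cQ robQ; rewrite inE cQ eqxx /=.
apply: leq_trans (robQ x _) _; first by rewrite ltnn.
by apply: subset_leq_card; apply/setSI/subsetDl.
Qed.

Lemma middle_answered (s : {perm 'I_n}) x : middle k t s x ->
  exists2 Q, Q \in meeting_sets k t.-1 W & scale_answer t s Q x.
Proof.
case/andP=> le_tx lt_xk.
have le_b : k - t <= #|[set z | s x < s z]| by rewrite card_rank_gt; lia.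
have [Q [cQ ansQ _ robQ]] :=
  exists_robust_query le_tx (subxx _) le_b (card_rank_cover W (leqnSn (s x))).
by exists Q; first exact: robust_query_meeting robQ.
Qed.

Lemma middle_transfer (s1 s2 : {perm 'I_n}) x :
  (forall Q, Q \in meeting_sets k t.-1 W ->
     scale_answer t s1 Q x = scale_answer t s2 Q x) ->
  middle k t s1 x -> middle k t s2 x.
Proof.
move=> same mx; have [Q QF ans1] := middle_answered mx.
apply: (scale_answer_middle t_gt0 (_ : #|Q| = k)); last by rewrite -same.
by move: QF; rewrite inE => /andP [/eqP].
Qed.

End Queries.

Section Determination.

Variables (k t n : nat) (W : {set 'I_n}) (sigma tau : {perm 'I_n}).
Hypotheses (t_gt0 : 0 < t) (t2_le_k : t.*2 <= k) (W_big : k.+2 <= #|W|).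
Hypothesis same_answers : forall Q x, Q \in meeting_sets k t.-1 W ->
  scale_answer t sigma Q x = scale_answer t tau Q x.

Lemma adjacent_order x y : middle k t sigma x -> middle k t sigma y ->
  sigma y = (sigma x).+1 :> nat -> tau x < tau y.
Proof.
case/andP=> le_tx _ /andP [_ lt_yk] yx1.
set b := [set z | sigma y < sigma z].
have sub_b : b \subset [set z | sigma x < sigma z].
  by apply/subsetP => z; rewrite !inE; lia.
have le_b : k - t <= #|b| by rewrite card_rank_gt; lia.
have [Q [cQ ansQ subQ robQ]] :=
  exists_robust_query t_gt0 t2_le_k W_big le_tx sub_b le_b
    (card_rank_cover W (eq_leq yx1)).
have yQ : y \notin Q.
  apply/negP => /(subsetP subQ); rewrite !inE ltnn orbF => /orP [|/eqP eq_yx]; first lia.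
  by move: yx1; rewrite eq_yx; lia.
have ans_tau : scale_answer t tau Q x.
  by rewrite -same_answers //; exact: robust_query_meeting robQ.
rewrite ltnNge leq_eqVlt negb_or; apply/andP; split.
  by apply/eqP => /rank_inj eq_yx; move: yx1; rewrite eq_yx; lia.
apply/negP => lt_yx.
have above_sub : [set z in Q | sigma x < sigma z] \subset [set z in Q | tau z < tau x].
  apply/subsetP => v; rewrite !inE => /andP [vQ lt_xv]; rewrite vQ /=.
  have vx : v != x by apply: contraTneq lt_xv => ->; rewrite ltnn.
  have QvF : y |: (Q :\ v) \in meeting_sets k t.-1 W.
    rewrite inE cardsU1 in_setD1 (negbTE yQ) andbF add1n -cQ (cardsD1 v Q) vQ eqxx /=.
    apply: leq_trans (robQ v _) _; first by rewrite -leqNgt ltnW.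
    by apply: subset_leq_card; apply/setSI/subsetUr.
  have := scale_answer_swap ans_tau yQ vQ vx.
  rewrite -same_answers // scale_answer_swap // lt_yx.
  have -> : (sigma y < sigma x) = false by lia.
  have -> : (sigma v < sigma x) = false by lia.
  by case: (tau v < tau x).
move/andP: ansQ => [xQ /eqP below_x]; move/andP: ans_tau => [_ /eqP tau_below].
have := subset_leq_card above_sub; rewrite tau_below.
have := card_split_at (@rank_inj _ sigma) xQ; rewrite cQ below_x; lia.
Qed.

Lemma middle_order x y : middle k t sigma x -> middle k t sigma y ->
  sigma x < sigma y -> tau x < tau y.
Proof.
move=> mx my; move dxy: (sigma y - (sigma x).+1) => d.
elim: d x mx dxy => [|d IH] x mx dxy lt_xy.
  by apply: adjacent_order => //; lia.
have lt_x1n : (sigma x).+1 < n by have := ltn_ord (sigma y); lia.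
set z := (sigma^-1)%g (Ordinal lt_x1n).
have sz : sigma z = (sigma x).+1 :> nat by rewrite /z permKV.
have mz : middle k t sigma z.
  by move: mx my; rewrite /middle sz => /andP [? ?] /andP [? ?]; apply/andP; split; lia.
by apply: ltn_trans (adjacent_order mx mz sz) (IH z mz _ _); lia.
Qed.

End Determination.

Lemma meeting_sets_determine_middle k t n (W : {set 'I_n}) :
  0 < t -> t.*2 <= k -> k.+2 <= #|W| -> determines_middle k t (meeting_sets k t.-1 W).
Proof.
move=> t_gt0 t2_le_k W_big sigma tau same; split.
  move=> x; apply/idP/idP; apply: (middle_transfer t_gt0 t2_le_k W_big) => Q QF.
    exact: same.
  by rewrite same.
move=> x y mx my; case: (ltngtP (sigma x) (sigma y)) => [lt_xy|lt_yx|/rank_inj -> ].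
- by rewrite (middle_order t_gt0 t2_le_k W_big same mx my lt_xy).
- apply/esym/negbTE; rewrite -leqNgt ltnW //.
  exact: (middle_order t_gt0 t2_le_k W_big same my mx lt_yx).
- by rewrite !ltnn.
Qed.

Theorem mainTheorem4 (k t : nat) (hk : 2 <= k) (ht1 : 1 <= t) (ht2 : t.*2 <= k) :
  exists C N0 : nat, forall n : nat, N0 <= n ->
    exists F : {set {set 'I_n}},
      (forall Q, Q \in F -> #|Q| = k) /\
      #|F| <= C * n ^ (k - t + 1) /\
      determines_middle k t F.
Proof.
exists (2 ^ k.+2 * (k - t + 2)), k.+2 => n le_kn.
set W := [set i : 'I_n | i < k.+2].
have card_W : #|W| = k.+2 by rewrite card_ord_lt.
exists (meeting_sets k t.-1 W); split; [|split].
- by move=> Q; rewrite inE => /andP [/eqP].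
- have n_gt0 : 0 < #|'I_n| by rewrite card_ord; lia.
  apply: leq_trans (card_meeting_sets k t.-1 W n_gt0) _.
  have -> : k - t.-1 = k - t + 1 by lia.
  by rewrite card_W card_ord mulnA addn1 addn2.
- by apply: meeting_sets_determine_middle; rewrite ?card_W.
Qed.
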